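(* Let $X$ be a CAT(0) cube complex and $v,w$ vertices of $X$. Root $X$ at $v$ and identify $X$ with $X_P$, where $P=P(X,v)$ is the associated poset with inconsistent pairs. Then the vertex $w$ corresponds to a consistent order ideal $Q$ of $P$, and the vertices of the interval $X[v,w]$ correspond exactly to the order ideals of $Q$ (with the order induced from $P$). In particular, $X[v,w]\cong X_Q$, where $Q$ is regarded as a poset with no inconsistent pairs.
   Context: Hyperplanes: in a cube complex, call two edges of a cube equivalent if they are parallel in that cube, and extend transitively to an equivalence relation on all edges of $X$; each equivalence class determines a hyperplane (the union of the midcubes of the cubes orthogonal to those edges). For a rooted CAT(0) cube complex $(X,v)$, the poset with inconsistent pairs $P(X,v)$ has as elements the hyperplanes of $X$; $i<j$ if, starting from $v$, every edge path must cross hyperplane $i$ before crossing hyperplane $j$; and $\{i,j\}$ is inconsistent if no vertex of $X$ is separated from $v$ by both $i$ and $j$. The vertex $x$ of $X$ is identified with the set of hyperplanes separating $x$ from $v$; these sets are exactly the consistent order ideals of $P$, and this identifies $X$ with the cube complex $X_P$ (vertices = consistent order ideals; a cube $C(I,M)$ for each consistent order ideal $I$ and $M\subseteq I_{\max}$, with vertices $I\setminus S$, $S\subseteq M$). A poset with inconsistent pairs is a locally finite poset of finite width with a set of pairs $\{p,q\}$ such that inconsistent pairs have no common upper bound and pairs above inconsistent pairs are inconsistent. The interval $X[v,w]$ is the subcomplex of $X$ consisting of all cubes all of whose vertices lie on at least one edge geodesic (shortest path in the 1-skeleton) between $v$ and $w$. *)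

From HB Require Import structures.
From mathcomp Require Import all_boot.
From mathcomp Require Import finmap.
Set Implicit Arguments. Unset Strict Implicit. Unset Printing Implicit Defensive.
Local Open Scope fset_scope.

Section PIPCubeComplex.
Variable T : choiceType.

Definition is_PIP (le incons : T -> T -> Prop) : Prop :=
  (forall x, le x x) /\
  (forall x y, le x y -> le y x -> x = y) /\
  (forall x y z, le x y -> le y z -> le x z) /\
      (forall x y, exists s : seq T, forall z, le x z -> le z y -> z \in s) /\
      (exists n : nat, forall s : seq T, uniq s ->
          (forall x y, x \in s -> y \in s -> le x y -> x = y) -> size s <= n) /\
      (forall x y, incons x y -> incons y x) /\
      (forall x y, incons x y -> ~ exists z, le x z /\ le y z) /\
      (forall x y x' y', incons x y -> le x x' -> le y y' -> incons x' y').

(* The cube complex X_P, for a PIP whose ground set is the carrier [E]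
   (E = predT for P itself; E = mem Q for a sub-poset Q). *)
Variables (E : pred T) (le incons : T -> T -> Prop).

Definition order_ideal (I : {fset T}) : Prop :=
  (forall x, x \in I -> E x) /\
  (forall x y, x \in I -> E y -> le y x -> y \in I).

Definition consistent (I : {fset T}) : Prop :=
  forall x y, x \in I -> y \in I -> ~ incons x y.

Definition XP_vertex (I : {fset T}) : Prop := order_ideal I /\ consistent I.

Definition is_max (I : {fset T}) (m : T) : Prop :=
  m \in I /\ forall y, y \in I -> le m y -> y = m.

(* cube C(I,M) of X_P: I a consistent order ideal, M a subset of I_max;
   its vertices are the sets I \ S for S a subset of M *)
Definition XP_cube (I M : {fset T}) : Prop :=
  XP_vertex I /\ forall m, m \in M -> is_max I m.

Definition cube_vertex (I M J : {fset T}) : Prop :=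
  exists2 S : {fset T}, S `<=` M & J = I `\` S.

Definition XP_adj (I J : {fset T}) : Prop :=
  (XP_vertex I /\ exists2 m, is_max I m & J = I `\ m) \/
  (XP_vertex J /\ exists2 m, is_max J m & I = J `\ m).

Definition XP_walk (a b : {fset T}) (s : seq {fset T}) : Prop :=
  [/\ s != [::], head fset0 s = a, last fset0 s = b &
      forall i, i.+1 < size s -> XP_adj (nth fset0 s i) (nth fset0 s i.+1)].

Definition XP_geodesic (a b : {fset T}) (s : seq {fset T}) : Prop :=
  XP_walk a b s /\ forall s', XP_walk a b s' -> size s <= size s'.

Definition interval_vertex (a b x : {fset T}) : Prop :=
  XP_vertex x /\ exists2 s, XP_geodesic a b s & x \in s.

Definition interval_cube (a b I M : {fset T}) : Prop :=
  XP_cube I M /\ forall J, cube_vertex I M J -> interval_vertex a b J.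

End PIPCubeComplex.

Definition induced_le (T : choiceType) (le : T -> T -> Prop) (Q : {fset T}) :=
  fun x y => x \in Q /\ y \in Q /\ le x y.
Definition no_incons (T : Type) := fun (_ _ : T) => False.

From HB Require Import structures.
From mathcomp Require Import all_boot.
From mathcomp Require Import finmap.
From mathcomp Require Import zify.
From Stdlib Require Import Classical.
Local Open Scope fset_scope.
Set Implicit Arguments. Unset Strict Implicit.

(* Distance in the 1-skeleton of X_P is bounded below by the size of the
   symmetric difference, since every edge adds or removes one element; and
   for nested ideals J <= K (K consistent) adding minimal elements of K \ J
   one at a time realises a walk of length #|K \ J|.  Hence the geodesics
   from the empty ideal to Q have length #|Q|, a vertex I lies on one iff
   #|I| + #|I \ Q| + #|Q \ I| = #|Q|, i.e. iff I <= Q, and the ideals of P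
   contained in Q are exactly the order ideals of Q.  Removing maximal
   elements keeps an ideal an ideal, so cubes match as well. *)

Section SymmetricDifference.
Variable T : choiceType.
Implicit Types a b c : {fset T}.

Definition sdist a b := (#|` a `\` b| + #|` b `\` a|)%N.

Lemma sdistxx a : sdist a a = 0.
Proof. by rewrite /sdist fsetDv cardfs0. Qed.

Lemma sdistC a b : sdist a b = sdist b a.
Proof. by rewrite /sdist addnC. Qed.

Lemma cardfsD_triangle a b c : (#|` a `\` b| <= #|` a `\` c| + #|` c `\` b|)%N.
Proof.
apply: leq_trans (fsubset_leq_card (B := (a `\` c) `|` (c `\` b)) _) _.
  apply/fsubsetP => x; rewrite !in_fsetD in_fsetU !in_fsetD => /andP [-> ->].
  by case: (x \in c).
by rewrite cardfsU leq_subr.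
Qed.

Lemma sdist_triangle a b c : (sdist a b <= sdist a c + sdist c b)%N.
Proof.
rewrite /sdist; have := cardfsD_triangle a b c; have := cardfsD_triangle b a c.
lia.
Qed.

Lemma sdist_fsetD1 a m : (sdist a (a `\ m) <= 1)%N.
Proof.
rewrite /sdist.
have -> : (a `\ m) `\` a = fset0.
  by apply/fsetP => x; rewrite !inE; case: (x \in a); rewrite ?andbF.
rewrite cardfs0 addn0 -(cardfs1 m); apply: fsubset_leq_card.
apply/fsubsetP => x; rewrite !inE.
by case: (x \in a); rewrite ?andbT ?andbF // negbK.
Qed.

End SymmetricDifference.

Section Walks.
Variables (T : choiceType) (le incons : T -> T -> Prop).
Local Notation adj := (XP_adj predT le incons).
Local Notation walk := (XP_walk predT le incons).

Lemma walk_singleton a b x : walk a b [:: x] -> x = a /\ x = b.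
Proof. by case. Qed.

Lemma walk_cons a b c s : adj a b -> walk b c s -> walk a c (a :: s).
Proof.
case: s => [|y s] ab [//= _ yb lc adjs]; subst y.
by split => // -[|i] /= Hi //; apply: adjs.
Qed.

Lemma walk_consE a c x y s :
  walk a c [:: x, y & s] -> [/\ x = a, adj a y & walk y c (y :: s)].
Proof.
move=> [_ /= xa lc adjs]; subst x; split => //; first exact: (adjs 0).
by split => // i Hi; apply: (adjs i.+1).
Qed.

Lemma walk_cat a b c s t : walk a b s -> walk b c t -> walk a c (s ++ behead t).
Proof.
elim: s a => [|x [|y s] IH] a; first by case.
  by move=> /walk_singleton [-> ->]; case: t {IH} => [|z t] [//= _ ->].
move=> /walk_consE [-> ab wyb] /(IH _ wyb).
by rewrite cat_cons; apply: walk_cons.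
Qed.

Lemma adj_sdist a b : adj a b -> (sdist a b <= 1)%N.
Proof.
case=> [[_ [m _ ->]] | [_ [m _ ->]]]; first exact: sdist_fsetD1.
by rewrite sdistC sdist_fsetD1.
Qed.

Lemma walk_mem_sdist a b s x :
  walk a b s -> x \in s -> (sdist a x + sdist x b < size s)%N.
Proof.
elim: s a x => [|y [|z s] IH] a x; first by case.
  by move=> /walk_singleton [-> ->]; rewrite inE => /eqP ->; rewrite sdistxx.
move=> /walk_consE [-> ab wzb]; rewrite inE => /predU1P [->|xs].
  have := IH z z wzb (mem_head _ _); have := sdist_triangle a b z.
  by have := adj_sdist ab; rewrite !sdistxx /=; lia.
have := IH z x wzb xs; have := sdist_triangle a x z; have := adj_sdist ab.
by rewrite /=; lia.
Qed.

Lemma walk_sdist a b s : walk a b s -> (sdist a b < size s)%N.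
Proof.
case: s => [|x s] w; first by case: w.
have [_ /= xa _ _] := w; subst x.
by have := walk_mem_sdist w (mem_head _ _); rewrite sdistxx.
Qed.

End Walks.

Section IdealWalks.
Variables (T : choiceType) (le incons : T -> T -> Prop).
Hypothesis le_anti : forall x y, le x y -> le y x -> x = y.
Hypothesis le_trans : forall x y z, le x y -> le y z -> le x z.
Local Notation ideal := (order_ideal predT le).
Local Notation vertex := (XP_vertex predT le incons).
Local Notation walk := (XP_walk predT le incons).

Lemma seq_has_minimal (s : seq T) : s != [::] ->
  exists2 m, m \in s & forall y, y \in s -> le y m -> y = m.
Proof.
elim: s => [//|x [|x' s] IH] _.
  by exists x => [|y]; rewrite ?inE // => /eqP.
have [m ms m_min] := IH isT.
have [lxm | nlxm] := classic (le x m).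
  exists x => [|y]; first exact: mem_head.
  rewrite inE => /predU1P [-> //|ys] lyx.
  have eym := m_min y ys (le_trans lyx lxm); subst y.
  exact: le_anti.
exists m => [|y]; first by rewrite inE ms orbT.
by rewrite inE => /predU1P [-> //|]; apply: m_min.
Qed.

Lemma order_ideal0 : ideal fset0.
Proof. by split. Qed.

Lemma ideal_fsetU1_minimal J K : ideal J -> ideal K -> J `<` K ->
  exists2 m, m \in K `\` J & ideal (m |` J).
Proof.
move=> [_ idJ] [_ idK]; rewrite fproperE => /andP [_ KnJ].
have /fset0Pn [x xKJ] : K `\` J != fset0 by rewrite fsetD_eq0.
have [|m mKJ m_min] := seq_has_minimal (s := K `\` J).
  by apply/eqP => e; move: xKJ; rewrite -[x \in _]/(x \in (K `\` J : seq T)) e.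
exists m => //; split=> // z y.
rewrite in_fset1U => /predU1P [-> _ lym | zJ _ lyz].
  case: (boolP (y \in J)) => [yJ|ynJ]; first by rewrite in_fset1U yJ orbT.
  have yKJ : y \in K `\` J by rewrite in_fsetD ynJ (idK m) //; case/fsetDP: mKJ.
  by rewrite (m_min y yKJ lym) fset1U1.
by rewrite in_fset1U (idJ z y zJ isT lyz) orbT.
Qed.

Lemma is_max_fsetU1 J m : ideal J -> m \notin J -> is_max le (m |` J) m.
Proof.
move=> [_ idJ] mJ; split=> [|y]; first exact: fset1U1.
rewrite in_fset1U => /predU1P [//|yJ lmy].
by rewrite (idJ y m yJ isT lmy) in mJ.
Qed.

Lemma adj_fsetU1 J m : ideal J -> m \notin J -> vertex (m |` J) ->
  XP_adj predT le incons J (m |` J).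
Proof.
move=> idJ mJ vJm; right; split=> //.
by exists m; [apply: is_max_fsetU1 | rewrite fsetU1K].
Qed.

Lemma vertex_sub I K : vertex K -> ideal I -> I `<=` K -> vertex I.
Proof.
by move=> [_ consK] idI /fsubsetP IK; split=> // x y /IK xK /IK; apply: consK.
Qed.

Lemma ideal_walk n J K : #|` K `\` J| = n -> ideal J -> vertex K -> J `<=` K ->
  exists2 s, walk J K s & size s = n.+1.
Proof.
elim: n J => [|n IH] J cardKJ idJ vK JK.
  have KJ : K `<=` J by rewrite -fsetD_eq0 -cardfs_eq0 cardKJ.
  have -> : J = K by apply/eqP; rewrite eqEfsubset JK KJ.
  by exists [:: K].
have JltK : J `<` K.
  by rewrite fproperE JK -fsetD_eq0 -cardfs_eq0 cardKJ.
have [m /fsetDP [mK mJ] idJm] := ideal_fsetU1_minimal idJ vK.1 JltK.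
have JmK : m |` J `<=` K by rewrite fsubUset fsub1set mK.
have [|s ws size_s] := IH (m |` J) _ idJm vK JmK.
  by move: cardKJ; rewrite !cardfsDS // cardfsU1 mJ; lia.
exists (J :: s); last by rewrite /= size_s.
by apply: walk_cons ws; apply: adj_fsetU1 => //; apply: vertex_sub vK _ _.
Qed.

Lemma ideal_walk_through I K : vertex K -> ideal I -> I `<=` K ->
  exists2 s, walk fset0 K s & size s = (#|` K|).+1 /\ I \in s.
Proof.
move=> vK idI IK.
have vI := vertex_sub vK idI IK.
have [s1 w1 size1] := ideal_walk (erefl _) order_ideal0 vI (fsub0set I).
have [s2 w2 size2] := ideal_walk (erefl _) idI vK IK.
exists (s1 ++ behead s2); first exact: walk_cat w1 w2.
split.
  rewrite size_cat size_behead size1 size2 fsetD0 cardfsDS //.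
  by have := fsubset_leq_card IK; lia.
have [+ _ <- _] := w1; case: s1 {w1 size1} => [//|x s1] _.
by rewrite mem_cat /= mem_last.
Qed.

Lemma sdist0l (K : {fset T}) : sdist fset0 K = #|` K|.
Proof. by rewrite /sdist fset0D fsetD0 cardfs0. Qed.

Lemma interval_vertex_fset0 Q I : vertex Q ->
  interval_vertex predT le incons fset0 Q I <-> ideal I /\ I `<=` Q.
Proof.
move=> vQ; split=> [[[idI _] [s [ws geo_s] Is]] | [idI IQ]].
  split=> //; rewrite -fsetD_eq0 -cardfs_eq0.
  have [t wt [size_t _]] := ideal_walk_through vQ order_ideal0 (fsub0set Q).
  have := walk_mem_sdist ws Is; have := geo_s t wt.
  have := cardfsD_triangle Q fset0 I.
  by rewrite sdist0l /sdist size_t !fsetD0; lia.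
have [s ws [size_s Is]] := ideal_walk_through vQ idI IQ.
split; first exact: vertex_sub vQ idI IQ.
exists s => //; split=> // t /walk_sdist.
by rewrite sdist0l size_s.
Qed.

End IdealWalks.

Section InducedOrder.
Variables (T : choiceType) (le : T -> T -> Prop) (Q : {fset T}).
Local Notation ideal := (order_ideal predT le).

Lemma order_ideal_induced I : ideal Q ->
  order_ideal (mem Q) (induced_le le Q) I <-> ideal I /\ I `<=` Q.
Proof.
move=> [_ idQ]; split=> [[IQ idI] | [[_ idI] /fsubsetP IQ]].
  have IQ' : I `<=` Q by apply/fsubsetP => x /IQ.
  split=> //; split=> // x y xI _ lyx.
  have xQ : x \in Q := IQ x xI.
  have yQ : y \in Q := idQ x y xQ isT lyx.
  exact: idI xI yQ (conj yQ (conj xQ lyx)).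
split=> [x /IQ // | x y xI _ [_ [_ lyx]]].
exact: idI lyx.
Qed.

Lemma is_max_induced I m : I `<=` Q ->
  is_max (induced_le le Q) I m <-> is_max le I m.
Proof.
move=> /fsubsetP IQ.
split=> -[mI m_max]; split=> // y yI lmy; apply: m_max => //.
  by split; [apply: IQ | split; [apply: IQ|]].
by case: lmy => [_ []].
Qed.

Lemma ideal_fsetD_max I S : ideal I -> (forall m, m \in S -> is_max le I m) ->
  ideal (I `\` S).
Proof.
move=> [_ idI] S_max; split=> // x y /fsetDP [xI xS] _ lyx.
rewrite in_fsetD (idI x y xI isT lyx) andbT; apply/negP => yS.
by have [_ /(_ x xI lyx) eq_xy] := S_max y yS; rewrite eq_xy yS in xS.
Qed.

End InducedOrder.

Theorem lemma3p2 (T : choiceType) (le incons : T -> T -> Prop)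
    (Q : {fset T}) :
  is_PIP le incons ->
  XP_vertex predT le incons Q ->
  (forall I : {fset T},
      interval_vertex predT le incons fset0 Q I <->
      order_ideal (mem Q) (induced_le le Q) I)
  /\
  (forall I M : {fset T},
      interval_cube predT le incons fset0 Q I M <->
      XP_cube (mem Q) (induced_le le Q) (@no_incons T) I M).
Proof.
move=> [_ [le_anti [le_trans _]]] vQ.
have idQ := vQ.1.
have vertexE I : interval_vertex predT le incons fset0 Q I <->
    order_ideal predT le I /\ I `<=` Q.
  exact: interval_vertex_fset0.
have vertexP I : interval_vertex predT le incons fset0 Q I <->
    order_ideal (mem Q) (induced_le le Q) I.
  exact: iff_trans (vertexE I) (iff_sym (order_ideal_induced _ idQ)).
split=> // I M; split.
  move=> [[_ M_max] cube_in].
  have /vertexE [idI IQ] : interval_vertex predT le incons fset0 Q I.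
    by apply: cube_in; exists fset0; rewrite ?fsub0set ?fsetD0.
  split; first by split=> [|x y _ _ []]; apply/order_ideal_induced.
  by move=> m /M_max /(is_max_induced _ _ IQ).
move=> [[/(order_ideal_induced _ idQ) [idI IQ] _] M_max].
have M_max' m : m \in M -> is_max le I m by move/M_max/(is_max_induced _ _ IQ).
split; first by split=> //; apply: vertex_sub vQ idI IQ.
move=> J [S /fsubsetP SM ->]; apply/vertexE; split.
  by apply: ideal_fsetD_max idI _ => m /SM /M_max'.
exact: fsubset_trans (fsubsetDl _ _) IQ.
Qed.
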